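(* Let $p\ge 2$ and $\epsilon>0$. There exists an in-tree task graph $T$ in the Pebble Game model such that every schedule $S$ of $T$ on $p$ processors with makespan $C_{\max}(S)=C^*_p(T)$ has peak memory $M(S)> (p-1-\epsilon)\,M^*_p(T)$. Consequently, no algorithm that is optimal for makespan minimization is a $(p-1-\epsilon)$-approximation for peak memory minimization.
   Context: Model. An in-tree task graph $T$ has nodes $\{1,\dots,n\}$ and a root; every non-root node $i$ has a parent, and $\mathrm{Children}(i)$ is the set of children of $i$. Each node $i$ has a processing time $w_i\ge 0$, an execution-file size $n_i\ge 0$ and an output-file size $f_i\ge 0$. A schedule on $p$ identical processors assigns each node $i$ a processor and a start time $\sigma_i\ge 0$; node $i$ runs without preemption during $[\sigma_i,\sigma_i+w_i)$, a processor runs at most one node at a time, and a node may start only after all its children have completed. The makespan is $C_{\max}=\max_i(\sigma_i+w_i)$. Memory: the output file of $i$ (size $f_i$) occupies memory from the start of $i$ until the completion of the parent of $i$ (for the root, until the end of the schedule), and the execution file of $i$ occupies memory while $i$ runs. The memory used at time $t$ is the total size of files present at time $t$; the peak memory $M(S)$ is the supremum over $t$ of the memory used. $C^*_p(T)$ denotes the minimum makespan and $M^*_p(T)$ the minimum peak memory over all schedules of $T$ on $p$ processors. The Pebble Game model is the special case $f_i=1$, $w_i=1$, $n_i=0$ for all $i$. *)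

From Stdlib Require Import Reals List.
Import ListNotations.
Open Scope R_scope.

(* An in-tree task graph with nodes 0..nn-1 (the paper's 1..n, shifted). *)
Record InTree := {
  nn : nat;
  root : nat;
  parent : nat -> nat;   (* parent of non-root nodes; value at root irrelevant *)
  w : nat -> R;
  nexec : nat -> R;      (* execution-file size n_i *)
  fout : nat -> R        (* output-file size f_i *)
}.

Definition wf_tree (T : InTree) : Prop :=
  (root T < nn T)%nat /\
  (forall i, (i < nn T)%nat -> i <> root T -> (parent T i < nn T)%nat) /\
  (forall i, (i < nn T)%nat -> exists k, Nat.iter k (parent T) i = root T) /\
  (forall i, (i < nn T)%nat -> 0 <= w T i /\ 0 <= nexec T i /\ 0 <= fout T i).

Definition is_child (T : InTree) (j i : nat) : Prop :=
  (j < nn T)%nat /\ j <> root T /\ parent T j = i.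

Definition pebble (T : InTree) : Prop :=
  forall i, (i < nn T)%nat -> fout T i = 1 /\ w T i = 1 /\ nexec T i = 0.

Record Schedule := { proc : nat -> nat; sigma : nat -> R }.

Definition valid_schedule (T : InTree) (p : nat) (S : Schedule) : Prop :=
  (forall i, (i < nn T)%nat -> (proc S i < p)%nat /\ 0 <= sigma S i) /\
  (forall i j, (i < nn T)%nat -> (j < nn T)%nat -> i <> j -> proc S i = proc S j ->
     sigma S i + w T i <= sigma S j \/ sigma S j + w T j <= sigma S i) /\
  (forall i j, (i < nn T)%nat -> is_child T j i -> sigma S j + w T j <= sigma S i).

Definition Cmax (T : InTree) (S : Schedule) : R :=
  fold_right (fun i acc => Rmax (sigma S i + w T i) acc) 0 (seq 0 (nn T)).

Definition in_interval (a t b : R) : bool :=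
  if Rle_dec a t then (if Rlt_dec t b then true else false) else false.

Definition out_end (T : InTree) (S : Schedule) (i : nat) : R :=
  if Nat.eq_dec i (root T) then Cmax T S
  else sigma S (parent T i) + w T (parent T i).

Definition mem_at (T : InTree) (S : Schedule) (t : R) : R :=
  fold_right Rplus 0
    (map (fun i =>
        (if in_interval (sigma S i) t (out_end T S i) then fout T i else 0) +
        (if in_interval (sigma S i) t (sigma S i + w T i) then nexec T i else 0))
       (seq 0 (nn T))).

Definition is_peak_memory (T : InTree) (S : Schedule) (m : R) : Prop :=
  is_lub (fun x => exists t, x = mem_at T S t) m.

Definition is_glb (E : R -> Prop) (m : R) : Prop :=
  (forall x, E x -> m <= x) /\ (forall b, (forall x, E x -> b <= x) -> b <= m).

Definition is_opt_makespan (T : InTree) (p : nat) (c : R) : Prop :=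
  is_glb (fun x => exists S, valid_schedule T p S /\ x = Cmax T S) c.

Definition is_opt_memory (T : InTree) (p : nat) (m : R) : Prop :=
  is_glb (fun x => exists S, valid_schedule T p S /\ is_peak_memory T S x) m.

(* Take a root with
   a chain of k+1 nodes below it and q = p-1 further children, each the parent of k leaves.
   The chain forces makespan k+2, and a schedule of makespan k+2 has only k+1 unit slots on p
   processors for the (k+1)p non-root nodes, so every slot is full: in the last slot, [k, k+1),
   the top of the chain and all q heads run, and the q k leaves are still held in memory.
   A sequential schedule (chain first, then the blocks one after the other) never holds more
   than k+q+3 files, so the ratio tends to q = p-1 as k grows. *)

From Stdlib Require Import Reals ZArith Lia Lra List.
Open Scope R_scope.

Lemma NoDup_length_le_injective (L : list nat) (f : nat -> nat) (c : nat) :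
  NoDup L -> (forall i, In i L -> (f i < c)%nat) ->
  (forall i j, In i L -> In j L -> f i = f j -> i = j) ->
  (length L <= c)%nat.
Proof.
  intros HL Hf Hinj.
  rewrite <- (length_map f), <- (length_seq c 0).
  apply NoDup_incl_length.
  - apply NoDup_map_NoDup_ForallPairs; [exact Hinj | exact HL].
  - intros y Hy. apply in_map_iff in Hy as [i [<- Hi]].
    apply in_seq. specialize (Hf i Hi). lia.
Qed.

Lemma injective_on_le (N c : nat) (f : nat -> nat) :
  (forall a, (a < N)%nat -> (f a < c)%nat) ->
  (forall a b, (a < N)%nat -> (b < N)%nat -> f a = f b -> a = b) ->
  (N <= c)%nat.
Proof.
  intros Hf Hinj. rewrite <- (length_seq N 0).
  apply (NoDup_length_le_injective _ f); [apply seq_NoDup | |].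
  - intros a Ha. apply in_seq in Ha. apply Hf. lia.
  - intros a b Ha Hb. apply in_seq in Ha, Hb. apply Hinj; lia.
Qed.

Lemma in_interval_spec a t b : in_interval a t b = true <-> a <= t < b.
Proof.
  unfold in_interval.
  destruct (Rle_dec a t), (Rlt_dec t b); split; intros H; try discriminate; lra.
Qed.

Lemma INR_succ_le (a b : nat) : (a < b)%nat -> INR a + 1 <= INR b.
Proof. intros H. rewrite <- S_INR. apply le_INR. lia. Qed.

Lemma INR_window_lt (a b : nat) t : INR a <= t -> t < INR b -> (a < b)%nat.
Proof. intros H1 H2. apply INR_lt. lra. Qed.

Definition live (T : InTree) (S : Schedule) (t : R) (i : nat) : bool :=
  in_interval (sigma S i) t (out_end T S i).

Lemma fold_Rplus_indicator (b : nat -> bool) (l : list nat) :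
  fold_right Rplus 0 (map (fun i => if b i then 1 else 0) l) = INR (length (filter b l)).
Proof.
  induction l as [|x l IH]; [reflexivity|]. cbn [map fold_right filter].
  rewrite IH. destruct (b x); cbn [length]; [rewrite S_INR|]; ring.
Qed.

Lemma mem_at_pebble T S t : pebble T ->
  mem_at T S t = INR (length (filter (live T S t) (seq 0 (nn T)))).
Proof.
  intros Hpeb. unfold mem_at. rewrite <- fold_Rplus_indicator. f_equal. apply map_ext_in.
  intros i Hi. apply in_seq in Hi. destruct (Hpeb i ltac:(lia)) as [-> [_ ->]].
  unfold live. destruct (in_interval (sigma S i) t (out_end T S i)),
    (in_interval (sigma S i) t (sigma S i + w T i)); ring.
Qed.

Lemma mem_at_nonneg T S t : pebble T -> 0 <= mem_at T S t.
Proof. intros Hpeb. rewrite mem_at_pebble by exact Hpeb. apply pos_INR. Qed.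

Lemma mem_at_ge_injective T S t (N : nat) (e : nat -> nat) : pebble T ->
  (forall a b, (a < N)%nat -> (b < N)%nat -> e a = e b -> a = b) ->
  (forall a, (a < N)%nat -> (e a < nn T)%nat /\ live T S t (e a) = true) ->
  INR N <= mem_at T S t.
Proof.
  intros Hpeb Hinj He. rewrite mem_at_pebble by exact Hpeb. apply le_INR.
  rewrite <- (length_seq N 0), <- (length_map e).
  apply NoDup_incl_length.
  - apply NoDup_map_NoDup_ForallPairs; [|apply seq_NoDup].
    intros a b Ha Hb. apply in_seq in Ha, Hb. apply Hinj; lia.
  - intros i Hi. apply in_map_iff in Hi as [a [<- Ha]]. apply in_seq in Ha.
    destruct (He a ltac:(lia)) as [Hlt Hlive].
    apply filter_In. split; [apply in_seq; lia | exact Hlive].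
Qed.

Lemma mem_at_le_injective T S t (c : nat) (f : nat -> nat) : pebble T ->
  (forall i, (i < nn T)%nat -> live T S t i = true -> (f i < c)%nat) ->
  (forall i j, (i < nn T)%nat -> (j < nn T)%nat -> live T S t i = true ->
     live T S t j = true -> f i = f j -> i = j) ->
  mem_at T S t <= INR c.
Proof.
  intros Hpeb Hf Hinj. rewrite mem_at_pebble by exact Hpeb. apply le_INR.
  apply (NoDup_length_le_injective _ f); [apply NoDup_filter, seq_NoDup | |].
  - intros i Hi. apply filter_In in Hi as [Hi Hl]. apply in_seq in Hi. apply Hf; [lia | exact Hl].
  - intros i j Hi Hj. apply filter_In in Hi as [Hi Hli], Hj as [Hj Hlj].
    apply in_seq in Hi, Hj. apply Hinj; [lia | lia | exact Hli | exact Hlj].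
Qed.

Lemma peak_memory_ge T S M t : is_peak_memory T S M -> mem_at T S t <= M.
Proof. intros [Hub _]. apply Hub. exists t. reflexivity. Qed.

Lemma opt_memory_nonneg T p M : pebble T -> is_opt_memory T p M -> 0 <= M.
Proof.
  intros Hpeb [_ Hglb]. apply Hglb. intros x [S [_ Hx]].
  apply Rle_trans with (mem_at T S 0); [apply mem_at_nonneg, Hpeb | apply peak_memory_ge, Hx].
Qed.

Lemma opt_memory_le T p S (B M : R) : valid_schedule T p S ->
  (forall t, mem_at T S t <= B) -> is_opt_memory T p M -> M <= B.
Proof.
  intros HS HB [Hlb _].
  destruct (completeness (fun x => exists t, x = mem_at T S t)) as [MS HMS].
  - exists B. intros x [t ->]. apply HB.
  - exists (mem_at T S 0), 0. reflexivity.
  - apply Rle_trans with MS.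
    + apply Hlb. exists S. split; assumption.
    + apply HMS. intros x [t ->]. apply HB.
Qed.

Lemma Cmax_ge T S i : (i < nn T)%nat -> sigma S i + w T i <= Cmax T S.
Proof.
  intros Hi. unfold Cmax. assert (Hin : In i (seq 0 (nn T))) by (apply in_seq; lia).
  revert Hin. generalize (seq 0 (nn T)) as l. intros l.
  induction l as [|a l IH]; intros Hin; [destruct Hin|]. cbn [fold_right].
  destruct Hin as [->|Hin]; [apply Rmax_l|].
  eapply Rle_trans; [apply IH, Hin | apply Rmax_r].
Qed.

Lemma Cmax_le T S (B : R) : 0 <= B ->
  (forall i, (i < nn T)%nat -> sigma S i + w T i <= B) -> Cmax T S <= B.
Proof.
  intros HB Hi. unfold Cmax.
  assert (Hin : forall i, In i (seq 0 (nn T)) -> sigma S i + w T i <= B).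
  { intros i H. apply in_seq in H. apply Hi. lia. }
  revert Hin. generalize (seq 0 (nn T)) as l. intros l.
  induction l as [|a l IH]; intros Hin; cbn [fold_right]; [exact HB|].
  apply Rmax_lub; [apply Hin; left; reflexivity | apply IH; intros i H; apply Hin; right; exact H].
Qed.

Lemma valid_start_before_parent T p S i : wf_tree T -> pebble T ->
  valid_schedule T p S -> (i < nn T)%nat -> i <> root T ->
  sigma S i + 1 <= sigma S (parent T i).
Proof.
  intros [_ [Hpar _]] Hpeb [_ [_ Hprec]] Hi Hr.
  destruct (Hpeb i Hi) as [_ [Hw _]]. rewrite <- Hw.
  apply Hprec; [apply Hpar; assumption | repeat split; assumption].
Qed.

Definition slot (x : R) : nat := Z.to_nat (Int_part x).

Lemma slot_spec x : 0 <= x -> INR (slot x) <= x < INR (slot x) + 1.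
Proof.
  intros Hx. destruct (base_Int_part x) as [H1 H2].
  assert (Hz : (-1 < Int_part x)%Z) by (apply lt_IZR; lra).
  unfold slot. rewrite INR_IZR_INZ, Z2Nat.id by lia. lra.
Qed.

(* Two unit tasks of one processor cannot start in the same slot [[m, m+1)], so at most [p]
   unit tasks start in each slot. *)
Lemma unit_tasks_capacity T p S (n N : nat) (e : nat -> nat) :
  pebble T -> valid_schedule T p S ->
  (forall a b, (a < N)%nat -> (b < N)%nat -> e a = e b -> a = b) ->
  (forall a, (a < N)%nat -> (e a < nn T)%nat /\ sigma S (e a) < INR n) ->
  (N <= n * p)%nat.
Proof.
  intros Hpeb [Hproc [Hsep _]] Hinj He.
  apply (injective_on_le N (n * p) (fun a => proc S (e a) * n + slot (sigma S (e a)))%nat).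
  - intros a Ha. destruct (He a Ha) as [Hlt Hst]. destruct (Hproc _ Hlt) as [Hp H0].
    pose proof (slot_spec _ H0). assert (slot (sigma S (e a)) < n)%nat by (apply INR_lt; lra).
    nia.
  - intros a b Ha Hb Hkey.
    destruct (He a Ha) as [Ha' Hsa], (He b Hb) as [Hb' Hsb].
    destruct (Hproc _ Ha') as [_ H0a], (Hproc _ Hb') as [_ H0b].
    pose proof (slot_spec _ H0a) as Sa. pose proof (slot_spec _ H0b) as Sb.
    assert (slot (sigma S (e a)) < n)%nat by (apply INR_lt; lra).
    assert (slot (sigma S (e b)) < n)%nat by (apply INR_lt; lra).
    assert (Hp : proc S (e a) = proc S (e b)) by nia.
    assert (Hs : slot (sigma S (e a)) = slot (sigma S (e b))) by nia.
    destruct (Nat.eq_dec (e a) (e b)) as [Heq | Hne]; [apply Hinj; assumption | exfalso].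
    rewrite Hs in Sa. destruct (Hpeb _ Ha') as [_ [Hwa _]], (Hpeb _ Hb') as [_ [Hwb _]].
    destruct (Hsep _ _ Ha' Hb' Hne Hp); lra.
Qed.

Definition nat_schedule (pr st : nat -> nat) : Schedule :=
  {| proc := pr; sigma := fun i => INR (st i) |}.

Lemma valid_nat_schedule T p pr st : pebble T ->
  (forall i, (i < nn T)%nat -> (pr i < p)%nat) ->
  (forall i j, (i < nn T)%nat -> (j < nn T)%nat -> pr i = pr j -> st i = st j -> i = j) ->
  (forall j, (j < nn T)%nat -> j <> root T -> (st j < st (parent T j))%nat) ->
  valid_schedule T p (nat_schedule pr st).
Proof.
  intros Hpeb Hpr Hdist Hprec. split; [|split]; cbn [proc sigma nat_schedule].
  - intros i Hi. split; [apply Hpr, Hi | apply pos_INR].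
  - intros i j Hi Hj Hne Hp.
    destruct (Hpeb i Hi) as [_ [-> _]]. destruct (Hpeb j Hj) as [_ [-> _]].
    assert (st i <> st j) by (intros Hs; apply Hne, Hdist; assumption).
    assert (st i < st j \/ st j < st i)%nat as [Hlt | Hlt] by lia;
      [left | right]; apply INR_succ_le, Hlt.
  - intros i j Hi [Hj [Hr <-]]. destruct (Hpeb j Hj) as [_ [-> _]].
    apply INR_succ_le, Hprec; assumption.
Qed.

Lemma Cmax_nat_schedule_le T pr st (B : nat) : pebble T ->
  (forall i, (i < nn T)%nat -> (st i <= B)%nat) ->
  Cmax T (nat_schedule pr st) <= INR B + 1.
Proof.
  intros Hpeb HB. apply Cmax_le; [pose proof (pos_INR B); lra|].
  intros i Hi. destruct (Hpeb i Hi) as [_ [-> _]]. cbn [sigma nat_schedule].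
  apply Rplus_le_compat_r, le_INR, HB, Hi.
Qed.

Lemma out_end_nonroot T S i : i <> root T ->
  out_end T S i = sigma S (parent T i) + w T (parent T i).
Proof.
  intros Hi. unfold out_end. destruct (Nat.eq_dec i (root T)); [contradiction | reflexivity].
Qed.

Lemma nat_schedule_live T pr st t i : wf_tree T -> pebble T ->
  (i < nn T)%nat -> i <> root T -> live T (nat_schedule pr st) t i = true ->
  INR (st i) <= t < INR (S (st (parent T i))).
Proof.
  intros [_ [Hpar _]] Hpeb Hi Hr Hl. unfold live in Hl. apply in_interval_spec in Hl.
  rewrite out_end_nonroot in Hl by exact Hr. cbn [sigma nat_schedule] in Hl.
  destruct (Hpeb _ (Hpar i Hi Hr)) as [_ [Hw _]]. rewrite Hw, <- S_INR in Hl. exact Hl.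
Qed.

Section Construction.

Variables q k : nat.

(* Node [0] is the root and [1..k+1] is a chain below it, node [i] being the parent of [i+1].
   For [j < q], block [j] consists of the head [block_node j k], a child of the root, and its
   [k] leaves [block_node j r], [r < k]. *)
Definition block_node (j r : nat) : nat := (k + 2 + j * (k + 1) + r)%nat.

Inductive node := Root | Chain (i : nat) | Leaf (j r : nat) | Head (j : nat).

Definition decode (n : nat) : node :=
  if (n =? 0)%nat then Root
  else if (n <=? k + 1)%nat then Chain n
  else let j := ((n - (k + 2)) / (k + 1))%nat in
       let r := ((n - (k + 2)) mod (k + 1))%nat in
       if (r =? k)%nat then Head j else Leaf j r.

Lemma decode_zero n : n = 0%nat -> decode n = Root.
Proof. intros ->. reflexivity. Qed.

Lemma decode_chain i : (1 <= i <= k + 1)%nat -> decode i = Chain i.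
Proof.
  intros Hi. unfold decode.
  destruct (Nat.eqb_spec i 0); [lia|]. destruct (Nat.leb_spec i (k + 1)); [reflexivity | lia].
Qed.

Lemma block_node_div_mod j r : (r <= k)%nat ->
  ((block_node j r - (k + 2)) / (k + 1) = j /\ (block_node j r - (k + 2)) mod (k + 1) = r)%nat.
Proof.
  intros Hr. unfold block_node.
  replace (k + 2 + j * (k + 1) + r - (k + 2))%nat with (r + j * (k + 1))%nat by lia.
  rewrite Nat.div_add, Nat.div_small, Nat.Div0.mod_add, Nat.mod_small by lia. lia.
Qed.

Lemma block_node_inj j r j' r' : (r <= k)%nat -> (r' <= k)%nat ->
  block_node j r = block_node j' r' -> j = j' /\ r = r'.
Proof.
  intros Hr Hr' Heq.
  destruct (block_node_div_mod j r Hr) as [Hj1 Hr1], (block_node_div_mod j' r' Hr') as [Hj2 Hr2].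
  rewrite Heq in Hj1, Hr1. split; congruence.
Qed.

Lemma decode_block j r : (r <= k)%nat ->
  decode (block_node j r) = if (r =? k)%nat then Head j else Leaf j r.
Proof.
  intros Hr. unfold decode. destruct (block_node_div_mod j r Hr) as [-> ->].
  destruct (Nat.eqb_spec (block_node j r) 0); [unfold block_node in *; lia|].
  destruct (Nat.leb_spec (block_node j r) (k + 1)); [unfold block_node in *; lia|].
  reflexivity.
Qed.

Lemma decode_head j : decode (block_node j k) = Head j.
Proof. rewrite decode_block, Nat.eqb_refl; [reflexivity | lia]. Qed.

Lemma decode_leaf j r : (r < k)%nat -> decode (block_node j r) = Leaf j r.
Proof.
  intros Hr. rewrite decode_block by lia.
  destruct (Nat.eqb_spec r k); [lia | reflexivity].
Qed.

Ltac eval_decode :=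
  repeat (first
    [ rewrite decode_head in *
    | match goal with
      | H : context [decode (block_node ?j ?r)] |- _ => rewrite (decode_leaf j r) in H by lia
      | |- context [decode (block_node ?j ?r)] => rewrite (decode_leaf j r) by lia
      | H : context [decode ?i] |- _ => rewrite (decode_zero i) in H by lia
      | |- context [decode ?i] => rewrite (decode_zero i) by lia
      | H : context [decode ?i] |- _ => rewrite (decode_chain i) in H by lia
      | |- context [decode ?i] => rewrite (decode_chain i) by lia
      end ];
    cbn beta iota in * ).

Definition tree_parent (n : nat) : nat :=
  match decode n with
  | Root | Head _ => 0
  | Chain i => i - 1
  | Leaf j _ => block_node j k
  end.

Definition tree : InTree :=
  {| nn := k + 2 + q * (k + 1); root := 0; parent := tree_parent;
     w := fun _ => 1; nexec := fun _ => 0; fout := fun _ => 1 |}.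

Inductive node_spec : nat -> Prop :=
  | RootSpec : node_spec 0
  | ChainSpec i : (1 <= i <= k + 1)%nat -> node_spec i
  | LeafSpec j r : (j < q)%nat -> (r < k)%nat -> node_spec (block_node j r)
  | HeadSpec j : (j < q)%nat -> node_spec (block_node j k).

Lemma node_specP n : (n < nn tree)%nat -> node_spec n.
Proof.
  cbn [nn tree]. intros Hn.
  destruct (Nat.eq_dec n 0) as [-> | H0]; [constructor|].
  destruct (Nat.le_gt_cases n (k + 1)); [constructor; lia|].
  set (j := ((n - (k + 2)) / (k + 1))%nat). set (r := ((n - (k + 2)) mod (k + 1))%nat).
  assert (Hn' : n = block_node j r).
  { unfold block_node, j, r. pose proof (Nat.div_mod_eq (n - (k + 2)) (k + 1)). lia. }
  assert (Hj : (j < q)%nat) by (apply Nat.Div0.div_lt_upper_bound; lia).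
  assert (Hr : (r < k + 1)%nat) by (apply Nat.mod_upper_bound; lia).
  rewrite Hn'. destruct (Nat.eq_dec r k) as [-> | Hne]; constructor; lia.
Qed.

Lemma block_node_lt j r : (j < q)%nat -> (r <= k)%nat -> (block_node j r < nn tree)%nat.
Proof. intros Hj Hr. cbn. unfold block_node. nia. Qed.

Lemma tree_pebble : pebble tree.
Proof. intros i _. repeat split; reflexivity. Qed.

Lemma chain_reaches_root i : (i <= k + 1)%nat -> Nat.iter i tree_parent i = 0%nat.
Proof.
  induction i as [|i IH]; intros Hi; [reflexivity|].
  rewrite Nat.iter_succ_r. unfold tree_parent at 2. eval_decode.
  replace (S i - 1)%nat with i by lia. apply IH. lia.
Qed.

Lemma tree_wf : wf_tree tree.
Proof.
  split; [cbn; lia|]. split; [|split].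
  - intros n Hn Hr. destruct (node_specP n Hn); cbn [parent tree nn] in *;
      unfold tree_parent; eval_decode; unfold block_node; nia.
  - intros n Hn. destruct (node_specP n Hn) as [|i Hi|j r Hj Hr|j Hj].
    + exists 0%nat. reflexivity.
    + exists i. apply chain_reaches_root. lia.
    + exists 2%nat. cbn. unfold tree_parent. eval_decode. reflexivity.
    + exists 1%nat. cbn. unfold tree_parent. eval_decode. reflexivity.
  - intros i _. cbn. lra.
Qed.

(* Processor [0] runs the chain and the root, processor [j+1] runs block [j]; the result has
   makespan [k+2], the length of the chain plus the root. *)
Definition makespan_proc (n : nat) : nat :=
  match decode n with
  | Root | Chain _ => 0
  | Leaf j _ | Head j => S j
  end.

Definition makespan_start (n : nat) : nat :=
  match decode n with
  | Root => k + 1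
  | Chain i => k + 1 - i
  | Leaf _ r => r
  | Head _ => k
  end.

Definition makespan_schedule : Schedule := nat_schedule makespan_proc makespan_start.

Lemma makespan_schedule_valid : valid_schedule tree (S q) makespan_schedule.
Proof.
  apply valid_nat_schedule; [exact tree_pebble | | |].
  - intros n Hn. destruct (node_specP n Hn); unfold makespan_proc; eval_decode; lia.
  - intros n n' Hn Hn' Hp Hs.
    destruct (node_specP n Hn), (node_specP n' Hn');
      unfold makespan_proc, makespan_start in *; eval_decode; unfold block_node; nia.
  - intros n Hn Hr. destruct (node_specP n Hn) as [|i Hi|j r Hj Hr'|j Hj]; [contradiction| | |];
      cbn [parent root tree] in *; unfold tree_parent, makespan_start; eval_decode; [|lia|lia].
    destruct (Nat.eq_dec i 1) as [-> | Hi1]; eval_decode; lia.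
Qed.

Lemma makespan_schedule_Cmax : Cmax tree makespan_schedule <= INR k + 2.
Proof.
  replace (INR k + 2) with (INR (k + 1) + 1) by (rewrite plus_INR; simpl; ring).
  apply Cmax_nat_schedule_le; [exact tree_pebble|].
  intros n Hn. destruct (node_specP n Hn); unfold makespan_start; eval_decode; lia.
Qed.

(* A single processor runs the chain, then the blocks in order (each block's leaves before its
   head), then the root. *)
Definition lean_start (n : nat) : nat :=
  match decode n with
  | Root => (q + 1) * (k + 1)
  | Chain i => k + 1 - i
  | Leaf _ _ | Head _ => n - 1
  end.

Definition lean_schedule : Schedule := nat_schedule (fun _ => 0%nat) lean_start.

Lemma lean_schedule_valid p : (0 < p)%nat -> valid_schedule tree p lean_schedule.
Proof.
  intros Hp. apply valid_nat_schedule; [exact tree_pebble | intros; exact Hp | |].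
  - intros n n' Hn Hn' _ Hs.
    destruct (node_specP n Hn), (node_specP n' Hn');
      unfold lean_start in *; eval_decode; unfold block_node in *; nia.
  - intros n Hn Hr. destruct (node_specP n Hn) as [|i Hi|j r Hj Hr'|j Hj]; [contradiction| | |];
      cbn [parent root tree] in *; unfold tree_parent, lean_start; eval_decode;
      unfold block_node; try nia.
    destruct (Nat.eq_dec i 1) as [-> | Hi1]; eval_decode; nia.
Qed.

(* Files live at the same time under [lean_schedule] get distinct registers: leaf files of
   only one block are live at a time, and two chain files are live simultaneously only when
   they are adjacent. *)
Definition lean_register (n : nat) : nat :=
  match decode n with
  | Root => 0
  | Leaf _ r => 1 + r
  | Head j => 1 + k + j
  | Chain i => 1 + k + q + i mod 2
  end.

Lemma lean_chain_window t i : (1 <= i <= k + 1)%nat -> live tree lean_schedule t i = true ->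
  INR (k + 1 - i) <= t /\ (i <> 1%nat -> t < INR (k + 3 - i)).
Proof.
  intros Hi Hl.
  apply nat_schedule_live in Hl; [|exact tree_wf | exact tree_pebble | cbn; lia | cbn; lia].
  cbn [parent tree] in Hl. unfold tree_parent, lean_start in Hl. eval_decode.
  split; [apply Hl|]. intros Hi1. eval_decode.
  replace (k + 3 - i)%nat with (S (k + 1 - (i - 1))) by lia. apply Hl.
Qed.

Lemma lean_leaf_window t j r : (j < q)%nat -> (r < k)%nat ->
  live tree lean_schedule t (block_node j r) = true ->
  INR (block_node j r - 1) <= t < INR (block_node j k).
Proof.
  intros Hj Hr Hl.
  apply nat_schedule_live in Hl;
    [|exact tree_wf | exact tree_pebble | apply block_node_lt; lia | cbn; unfold block_node; lia].
  cbn [parent tree] in Hl. unfold tree_parent, lean_start in Hl. eval_decode.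
  replace (block_node j k) with (S (block_node j k - 1)) by (unfold block_node; lia). exact Hl.
Qed.

Lemma lean_register_injective t n n' : (n < nn tree)%nat -> (n' < nn tree)%nat ->
  live tree lean_schedule t n = true -> live tree lean_schedule t n' = true ->
  lean_register n = lean_register n' -> n = n'.
Proof.
  intros Hn Hn' Hl Hl' Heq.
  destruct (node_specP n Hn) as [|i Hi|j r Hj Hr|j Hj],
    (node_specP n' Hn') as [|i' Hi'|j' r' Hj' Hr'|j' Hj'];
    unfold lean_register in Heq; eval_decode; try (unfold block_node; lia).
  - apply lean_chain_window in Hl as [Hlo Hhi], Hl' as [Hlo' Hhi']; try lia.
    assert (i' = 1%nat \/ (k + 1 - i < k + 3 - i')%nat).
    { destruct (Nat.eq_dec i' 1); [left | right; apply (INR_window_lt _ _ t)]; auto. }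
    assert (i = 1%nat \/ (k + 1 - i' < k + 3 - i)%nat).
    { destruct (Nat.eq_dec i 1); [left | right; apply (INR_window_lt _ _ t)]; auto. }
    pose proof (Nat.div_mod_eq i 2). pose proof (Nat.div_mod_eq i' 2). lia.
  - apply lean_leaf_window in Hl, Hl'; try lia.
    pose proof (INR_window_lt _ _ _ (proj1 Hl) (proj2 Hl')).
    pose proof (INR_window_lt _ _ _ (proj1 Hl') (proj2 Hl)).
    assert (r' = r) by lia. subst r'. unfold block_node in *.
    assert (j = j') by (clear - H H0 Hr; nia). subst j'. reflexivity.
Qed.

Lemma lean_schedule_memory t : mem_at tree lean_schedule t <= INR (k + q + 3).
Proof.
  apply (mem_at_le_injective _ _ _ _ lean_register);
    [exact tree_pebble | | apply lean_register_injective].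
  intros n Hn _.
  destruct (node_specP n Hn) as [|i Hi| | ]; unfold lean_register; eval_decode; try lia.
  pose proof (Nat.mod_upper_bound i 2). lia.
Qed.

Section MakespanOptimal.

Hypothesis k_pos : (0 < k)%nat.
Variable sched : Schedule.
Hypothesis sched_valid : valid_schedule tree (S q) sched.
Hypothesis sched_fast : Cmax tree sched <= INR k + 2.

Lemma start_before_parent n : (n < nn tree)%nat -> n <> 0%nat ->
  sigma sched n + 1 <= sigma sched (tree_parent n).
Proof.
  apply (valid_start_before_parent tree (S q));
    [exact tree_wf | exact tree_pebble | exact sched_valid].
Qed.

Lemma root_start_le : sigma sched 0 <= INR k + 1.
Proof. pose proof (Cmax_ge tree sched 0 ltac:(cbn; lia)) as H. cbn [w tree] in H. lra. Qed.

Lemma chain_start_le i : (1 <= i <= k + 1)%nat -> sigma sched i + INR i <= INR k + 1.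
Proof.
  induction i as [|i IH]; intros Hi; [lia|].
  pose proof (start_before_parent (S i) ltac:(cbn; lia) ltac:(lia)) as Hp.
  unfold tree_parent in Hp. eval_decode. replace (S i - 1)%nat with i in Hp by lia.
  rewrite S_INR. destruct (Nat.eq_dec i 0) as [-> | Hi0].
  - pose proof root_start_le. simpl. lra.
  - specialize (IH ltac:(lia)). lra.
Qed.

Lemma head_start_le j : (j < q)%nat -> sigma sched (block_node j k) + 1 <= INR k + 1.
Proof.
  intros Hj. pose proof root_start_le.
  pose proof (start_before_parent (block_node j k) ltac:(apply block_node_lt; lia)
    ltac:(unfold block_node; lia)) as Hp.
  unfold tree_parent in Hp. eval_decode. lra.
Qed.

Lemma leaf_start_le j r : (j < q)%nat -> (r < k)%nat ->
  sigma sched (block_node j r) + 1 <= sigma sched (block_node j k).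
Proof.
  intros Hj Hr.
  pose proof (start_before_parent (block_node j r) ltac:(apply block_node_lt; lia)
    ltac:(unfold block_node; lia)) as Hp.
  unfold tree_parent in Hp. eval_decode. exact Hp.
Qed.

Definition leaf (m : nat) : nat := block_node (m / k) (m mod k).

Lemma leaf_bounds m : (m < q * k)%nat -> (m / k < q)%nat /\ (m mod k < k)%nat.
Proof.
  intros Hm. split; [apply Nat.Div0.div_lt_upper_bound; lia | apply Nat.mod_upper_bound; lia].
Qed.

Lemma leaf_injective m m' : leaf m = leaf m' -> m = m'.
Proof.
  intros Heq. pose proof (Nat.mod_upper_bound m k ltac:(lia)).
  pose proof (Nat.mod_upper_bound m' k ltac:(lia)).
  apply block_node_inj in Heq as [Hdiv Hmod]; [|lia|lia].
  rewrite (Nat.div_mod_eq m k), (Nat.div_mod_eq m' k). lia.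
Qed.

Definition early_node (j m : nat) : nat :=
  if (m <? k)%nat then (2 + m)%nat
  else if (m <? k + q * k)%nat then leaf (m - k)
  else block_node j k.

Lemma early_node_injective j a b : (a < k + q * k + 1)%nat -> (b < k + q * k + 1)%nat ->
  early_node j a = early_node j b -> a = b.
Proof.
  intros Ha Hb. unfold early_node, leaf.
  pose proof (Nat.mod_upper_bound (a - k) k ltac:(lia)).
  pose proof (Nat.mod_upper_bound (b - k) k ltac:(lia)).
  destruct (Nat.ltb_spec a k), (Nat.ltb_spec b k), (Nat.ltb_spec a (k + q * k)),
    (Nat.ltb_spec b (k + q * k)); unfold block_node; intros Heq; try lia;
    try (apply block_node_inj in Heq; lia).
  apply leaf_injective in Heq. lia.
Qed.

(* Otherwise the chain nodes [2..k+1], all leaves and head [j], enumerated by [early_node j],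
   would be [k + q k + 1] unit tasks starting before time [k] on [q + 1] processors. *)
Lemma heads_start_late j : (j < q)%nat -> INR k - 1 < sigma sched (block_node j k).
Proof.
  intros Hj. apply Rnot_le_lt. intros Hearly.
  assert (Hcap : (k + q * k + 1 <= k * S q)%nat); [|lia].
  apply (unit_tasks_capacity tree (S q) sched k _ (early_node j) tree_pebble sched_valid).
  - intros a b Ha Hb. apply early_node_injective; assumption.
  - intros m Hm. unfold early_node. cbn [nn tree].
    destruct (Nat.ltb_spec m k); [|destruct (Nat.ltb_spec m (k + q * k))].
    + pose proof (chain_start_le (2 + m) ltac:(lia)).
      assert (2 <= INR (2 + m)) by (apply (le_INR 2); lia).
      split; [lia | lra].
    + destruct (leaf_bounds (m - k) ltac:(lia)) as [Hd Hr]. unfold leaf.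
      pose proof (leaf_start_le _ _ Hd Hr). pose proof (head_start_le _ Hd).
      split; [apply block_node_lt; lia | lra].
    + split; [apply block_node_lt; lia | lra].
Qed.

Lemma leaf_live m : (m < q * k)%nat -> live tree sched (INR k) (leaf m) = true.
Proof.
  intros Hm. destruct (leaf_bounds m Hm) as [Hd Hr].
  unfold live. apply in_interval_spec.
  rewrite out_end_nonroot by (cbn; unfold leaf, block_node; lia).
  cbn [parent w tree]. unfold tree_parent, leaf. eval_decode.
  pose proof (leaf_start_le _ _ Hd Hr). pose proof (head_start_le _ Hd).
  pose proof (heads_start_late _ Hd). lra.
Qed.

Lemma makespan_optimal_memory : INR (q * k) <= mem_at tree sched (INR k).
Proof.
  apply (mem_at_ge_injective _ _ _ _ leaf tree_pebble).
  - intros a b _ _. apply leaf_injective.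
  - intros m Hm. split; [|apply leaf_live, Hm].
    destruct (leaf_bounds m Hm). apply block_node_lt; lia.
Qed.

End MakespanOptimal.

End Construction.

Lemma ratio_gap (q k eps MS M : R) : 1 <= q -> 1 <= k -> 0 < eps ->
  q * (q + 3) < eps * k -> q * k <= MS -> 0 <= M <= k + q + 3 ->
  MS > (q - eps) * M.
Proof.
  intros Hq Hk Heps Hbig Hlow [HM0 HM].
  destruct (Rle_dec (q - eps) 0) as [Hneg | Hpos].
  - assert ((q - eps) * M <= 0) by nra. nra.
  - assert ((q - eps) * M <= (q - eps) * (k + q + 3)) by (apply Rmult_le_compat_l; lra). nra.
Qed.

Theorem theorem4 (p : nat) (eps : R) :
  (2 <= p)%nat -> 0 < eps ->
  exists T : InTree, wf_tree T /\ pebble T /\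
    forall (S : Schedule) (Cstar Mstar MS : R),
      valid_schedule T p S ->
      is_opt_makespan T p Cstar -> Cmax T S = Cstar ->
      is_opt_memory T p Mstar ->
      is_peak_memory T S MS ->
      MS > (INR p - 1 - eps) * Mstar.
Proof.
  intros Hp Heps. destruct p as [|q]; [lia|].
  destruct (INR_unbounded (INR q * (INR q + 3) / eps)) as [n Hn].
  set (k := S n).
  exists (tree q k). split; [apply tree_wf|]. split; [apply tree_pebble|].
  intros Sc Cstar Mstar MS HS Hopt HCS Hmem Hpeak.
  assert (Hfast : Cmax (tree q k) Sc <= INR k + 2).
  { rewrite HCS. eapply Rle_trans; [apply (proj1 Hopt) | apply makespan_schedule_Cmax].
    exists (makespan_schedule k). split; [apply makespan_schedule_valid | reflexivity]. }
  assert (Hlow : INR q * INR k <= MS).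
  { rewrite <- mult_INR. eapply Rle_trans; [|apply peak_memory_ge, Hpeak].
    apply makespan_optimal_memory; [lia | exact HS | exact Hfast]. }
  assert (Hup : Mstar <= INR k + INR q + 3).
  { replace 3 with (INR 3) by (simpl; ring). rewrite <- !plus_INR.
    exact (opt_memory_le _ _ _ _ _ (lean_schedule_valid q k (S q) ltac:(lia))
             (lean_schedule_memory q k) Hmem). }
  pose proof (opt_memory_nonneg _ _ _ (tree_pebble q k) Hmem).
  assert (Hbig : INR q * (INR q + 3) < eps * INR k).
  { unfold k. rewrite S_INR. apply Rmult_gt_compat_l with (r := eps) in Hn; [|exact Heps].
    replace (eps * (INR q * (INR q + 3) / eps)) with (INR q * (INR q + 3)) in Hn by (field; lra).
    lra. }
  rewrite S_INR, Rplus_minus_r.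
  apply ratio_gap with (k := INR k); try lra; apply (le_INR 1); lia.
Qed.
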